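(* Let $m\ge 1$ and let $\vec f=(f_1,\dots,f_m)\in\mathbb{R}^m$ have pairwise distinct components. Define the Gibbs weights $w_\alpha:=e^{f_\alpha}/\sum_{\beta=1}^m e^{f_\beta}$, $\alpha=1,\dots,m$. Let $\delta\vec f=(\delta f_1,\dots,\delta f_m)\in\mathbb{R}^m$ be arbitrary, and regard $\vec f$ and $\delta\vec f$ as a pair of random variables with joint probability $w(f_\alpha,\delta f_\beta)=\delta_{\alpha\beta}w_\alpha$ (i.e. the index $\alpha$ is drawn with probability $w_\alpha$ and both variables take their $\alpha$-th value). Call them totally uncorrelated if for all natural numbers $u,v$ $$\sum_{\alpha=1}^m w_\alpha f_\alpha^{u}(\delta f_\alpha)^{v}-\Big(\sum_{\alpha=1}^m w_\alpha f_\alpha^{u}\Big)\Big(\sum_{\alpha=1}^m w_\alpha (\delta f_\alpha)^{v}\Big)=0.$$ Then $\vec f$ and $\delta\vec f$ are totally uncorrelated if and only if $\delta\vec f$ is proportional to $(1,\dots,1)$.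
   Context: Here $\delta_{\alpha\beta}$ is the Kronecker delta. The vector $\vec f$ represents the values $f_\alpha(\boldsymbol{x})$ of the functions defining a statistical hypersurface $x_{n+1}=\ln\sum_\alpha e^{f_\alpha(\boldsymbol{x})}$ at a point, and $\delta\vec f$ an infinitesimal variation of these values; only the finite-dimensional statement above is needed. *)

From mathcomp Require Import all_boot all_order all_algebra.
From mathcomp Require Import reals sequences exp.
Set Implicit Arguments. Unset Strict Implicit. Unset Printing Implicit Defensive.
Import Order.TTheory GRing.Theory Num.Theory.
Local Open Scope ring_scope.

Definition gibbs (R : realType) (m : nat) (f : 'I_m -> R) (a : 'I_m) : R :=
  expR (f a) / \sum_(b < m) expR (f b).

Definition totally_uncorrelated (R : realType) (m : nat) (f df : 'I_m -> R) : Prop :=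
  forall u v : nat,
    \sum_(a < m) gibbs f a * f a ^+ u * df a ^+ v
    - (\sum_(a < m) gibbs f a * f a ^+ u) * (\sum_(a < m) gibbs f a * df a ^+ v) = 0.

From mathcomp Require Import all_boot all_order all_algebra.
From mathcomp Require Import reals sequences exp.
From mathcomp Require Import ring.
Set Implicit Arguments. Unset Strict Implicit. Unset Printing Implicit Defensive.
Local Open Scope ring_scope.
Import Order.TTheory GRing.Theory Num.Theory.

(* Centring df at its Gibbs mean turns the case v = 1 of total uncorrelation
   into the vanishing of every moment of the weights w_a (df_a - E[df]) against
   f, hence of their pairing with any polynomial in f. Pairing with
   prod_(j != b) (X - f_j), which vanishes at every f_a except f_b because the
   f_a are distinct, isolates the b-th weight, so df_b = E[df] for every b. *)

Lemma sum_horner_eq0 (R : comNzRingType) (I : finType) (f g : I -> R) :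
  (forall u, \sum_i g i * f i ^+ u = 0) ->
  forall p : {poly R}, \sum_i g i * p.[f i] = 0.
Proof.
move=> mom0 p; under eq_bigr do rewrite horner_coef mulr_sumr.
rewrite exchange_big big1 // => k _.
by under eq_bigr do rewrite mulrCA; rewrite -mulr_sumr mom0 mulr0.
Qed.

Lemma moments_eq0_weights_eq0 (R : idomainType) (I : finType) (f g : I -> R) :
  injective f -> (forall u, \sum_i g i * f i ^+ u = 0) -> forall b, g b = 0.
Proof.
move=> inj_f mom0 b.
pose p := \prod_(j | j != b) ('X - (f j)%:P).
have pfE a : p.[f a] = \prod_(j | j != b) (f a - f j).
  by rewrite horner_prod; apply: eq_bigr => j _; rewrite hornerXsubC.
have pf_eq0 a : a != b -> p.[f a] = 0.
  by move=> ab; rewrite pfE (bigD1 a) //= subrr mul0r.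
have pfb_neq0 : p.[f b] != 0.
  rewrite pfE; apply/prodf_neq0 => j jb.
  by rewrite subr_eq0; apply: contra jb => /eqP/inj_f ->.
have := sum_horner_eq0 mom0 p.
rewrite (bigD1 b) //= big1 ?addr0 => [/eqP|a ab]; last by rewrite pf_eq0 ?mulr0.
by rewrite mulf_eq0 (negbTE pfb_neq0) orbF => /eqP.
Qed.

Section Gibbs.
Variables (R : realType) (m : nat) (f : 'I_m -> R).
Hypothesis m_gt0 : (0 < m)%N.

Lemma sum_expR_gt0 : 0 < \sum_(b < m) expR (f b).
Proof.
rewrite (bigD1 (Ordinal m_gt0)) //= ltr_pwDl ?expR_gt0 //.
by apply: sumr_ge0 => i _; apply/ltW/expR_gt0.
Qed.

Lemma gibbs_gt0 a : 0 < gibbs f a.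
Proof. by rewrite /gibbs divr_gt0 ?expR_gt0 ?sum_expR_gt0. Qed.

Lemma sum_gibbs : \sum_(a < m) gibbs f a = 1.
Proof. by rewrite /gibbs -mulr_suml divff // gt_eqF ?sum_expR_gt0. Qed.

Lemma totally_uncorrelated_cst (df : 'I_m -> R) (c : R) :
  (forall a, df a = c) -> totally_uncorrelated f df.
Proof.
move=> df_c u v; under eq_bigr do rewrite df_c.
under [X in _ * X]eq_bigr do rewrite df_c.
by rewrite -[X in _ * X]mulr_suml -mulr_suml sum_gibbs mul1r subrr.
Qed.

End Gibbs.

Lemma totally_uncorrelated_centred_moments (R : realType) (m : nat)
    (f df : 'I_m -> R) : totally_uncorrelated f df ->
  let c := \sum_(a < m) gibbs f a * df a in
  forall u, \sum_a gibbs f a * (df a - c) * f a ^+ u = 0.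
Proof.
move=> uncor c u; have meanE : \sum_a gibbs f a * df a ^+ 1 = c.
  by apply: eq_bigr => a _; rewrite expr1.
rewrite -[RHS](uncor u 1%N) meanE mulr_suml -sumrB.
by apply: eq_bigr => a _; rewrite expr1; ring.
Qed.

Theorem proposition3p1 (R : realType) (m : nat) (f df : 'I_m -> R) :
  (1 <= m)%N ->
  (forall a b : 'I_m, a != b -> f a != f b) ->
  totally_uncorrelated f df <-> exists c : R, forall a : 'I_m, df a = c.
Proof.
move=> m_gt0 f_neq; split => [uncor | [c df_c]]; last first.
  exact: totally_uncorrelated_cst df_c.
have inj_f : injective f.
  by move=> a b; apply: contra_eq; exact: f_neq.
exists (\sum_(a < m) gibbs f a * df a) => a.
have := moments_eq0_weights_eq0 inj_f (totally_uncorrelated_centred_moments uncor) a.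
by move/eqP; rewrite mulf_eq0 (gt_eqF (gibbs_gt0 f m_gt0 a)) /= subr_eq0 => /eqP.
Qed.
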